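(* For BQAP1 and for BQAP2 (with $m,n\ge2$), the objective function value of a solution that is locally optimal with respect to the swap neighborhood and the concurrent swap neighborhood can be arbitrarily bad and can be worse than the average $\mathcal{A}_1(Q,c,d)$ (resp. $\mathcal{A}_2(Q,c,d)$): for every $K>0$ there is an instance and a feasible solution that is locally optimal for both neighborhoods whose objective value exceeds the optimal value by more than $K$ and is strictly greater than the average of the objective value over all feasible solutions.
   Context: $M=\{1,\dots,m\}$, $N=\{1,\dots,n\}$. BQAP1 (minimization): data $Q=(q_{ijk\ell})$ ($m\times n\times m\times n$ real array), real $m\times n$ matrices $c,d$; feasible solutions are pairs $(x,y)$ of $m\times n$ 0-1 matrices with $\sum_{j} x_{ij}=1$ for all $i\in M$ and $\sum_{i} y_{ij}=1$ for all $j\in N$; objective $f_1(x,y)=\sum_{i,k\in M}\sum_{j,\ell\in N} q_{ijk\ell}x_{ij}y_{k\ell}+\sum c_{ij}x_{ij}+\sum d_{ij}y_{ij}$. BQAP2 (minimization): data $Q$ ($m\times m\times n\times n$), $m\times m$ matrix $c$, $n\times n$ matrix $d$; feasible $(x,y)$: $x$ is $m\times m$ 0-1 with unit row sums, $y$ is $n\times n$ 0-1 with unit column sums; objective $f_2(x,y)=\sum_{i,j\in M}\sum_{k,\ell\in N} q_{ijk\ell}x_{ij}y_{k\ell}+\sum c_{ij}x_{ij}+\sum d_{ij}y_{ij}$. $\mathcal{A}_1,\mathcal{A}_2$ are the averages of the objective over all feasible solutions. For a feasible $(x,y)$, $swapx(i,j)$ produces $(x',y)$ where $x'$ agrees with $x$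 except that row $i$ is replaced by the unit vector with its 1 in column $j$; $swapy(i,j)$ produces $(x,y')$ where $y'$ agrees with $y$ except column $j$ is replaced by the unit vector with its 1 in row $i$. The swap neighborhood of $(x,y)$ consists of all solutions obtained by one $swapx(i,j)$ or one $swapy(i,j)$. The concurrent swap neighborhood consists of all solutions $(x',y)$ with $x'$ any feasible $x$-matrix (obtained by applying swaps on $x$ in distinct rows) and all solutions $(x,y')$ with $y'$ any feasible $y$-matrix. A solution is locally optimal for a neighborhood if no solution in its neighborhood has strictly smaller objective value. *)

From HB Require Import structures.
From mathcomp Require Import all_boot all_order all_algebra.
Set Implicit Arguments. Unset Strict Implicit. Unset Printing Implicit Defensive.
Import Order.TTheory GRing.Theory Num.Theory.
Local Open Scope ring_scope.

Section BQAP.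
Variable R : realFieldType.

(* 0-1 matrices are represented as boolean matrices; b2R converts an entry. *)
Definition b2R (b : bool) : R := (b : nat)%:R.

Definition rowfeas p q (x : 'M[bool]_(p, q)) : bool :=
  [forall i, (\sum_j (x i j : nat) == 1)%N].
Definition colfeas p q (y : 'M[bool]_(p, q)) : bool :=
  [forall j, (\sum_i (y i j : nat) == 1)%N].

Definition swapx p q (x : 'M[bool]_(p, q)) (i : 'I_p) (j : 'I_q) : 'M[bool]_(p, q) :=
  \matrix_(k, l) (if k == i then l == j else x k l).
Definition swapy p q (y : 'M[bool]_(p, q)) (i : 'I_p) (j : 'I_q) : 'M[bool]_(p, q) :=
  \matrix_(k, l) (if l == j then k == i else y k l).

Section Generic.
Variables (p q r s : nat).
Notation XT := 'M[bool]_(p, q).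
Notation YT := 'M[bool]_(r, s).

Definition feasible (x : XT) (y : YT) : bool := rowfeas x && colfeas y.

Definition swap_nbhd (x : XT) (y : YT) (x' : XT) (y' : YT) : Prop :=
  (y' = y /\ exists i j, x' = swapx x i j) \/
  (x' = x /\ exists i j, y' = swapy y i j).

Definition concurrent_swap_nbhd (x : XT) (y : YT) (x' : XT) (y' : YT) : Prop :=
  (y' = y /\ rowfeas x') \/ (x' = x /\ colfeas y').

Definition locally_optimal (N : XT -> YT -> XT -> YT -> Prop)
  (f : XT -> YT -> R) (x : XT) (y : YT) : Prop :=
  forall x' y', N x y x' y' -> ~ (f x' y' < f x y).

Definition average (f : XT -> YT -> R) : R :=
  (\sum_(pr : XT * YT | feasible pr.1 pr.2) f pr.1 pr.2) /
  (#|[pred pr : XT * YT | feasible pr.1 pr.2]|)%:R.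

Definition bad_local_optimum (f : XT -> YT -> R) (K : R) (x : XT) (y : YT) : Prop :=
  [/\ feasible x y,
      locally_optimal swap_nbhd f x y,
      locally_optimal concurrent_swap_nbhd f x y,
      (exists xs ys, [/\ feasible xs ys,
                         (forall x' y', feasible x' y' -> f xs ys <= f x' y') &
                         f xs ys + K < f x y])
    & average f < f x y].
End Generic.

Definition f1 m n (Q : 'I_m -> 'I_n -> 'I_m -> 'I_n -> R) (c d : 'M[R]_(m, n))
  (x y : 'M[bool]_(m, n)) : R :=
  \sum_(i < m) \sum_(k < m) \sum_(j < n) \sum_(l < n)
      Q i j k l * b2R (x i j) * b2R (y k l)
  + \sum_(i < m) \sum_(j < n) c i j * b2R (x i j)
  + \sum_(i < m) \sum_(j < n) d i j * b2R (y i j).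

Definition f2 m n (Q : 'I_m -> 'I_m -> 'I_n -> 'I_n -> R) (c : 'M[R]_m) (d : 'M[R]_n)
  (x : 'M[bool]_m) (y : 'M[bool]_n) : R :=
  \sum_(i < m) \sum_(j < m) \sum_(k < n) \sum_(l < n)
      Q i j k l * b2R (x i j) * b2R (y k l)
  + \sum_(i < m) \sum_(j < m) c i j * b2R (x i j)
  + \sum_(i < n) \sum_(j < n) d i j * b2R (y i j).

End BQAP.

From HB Require Import structures.
From mathcomp Require Import all_boot all_order all_algebra.
From mathcomp Require Import ring.
Set Implicit Arguments. Unset Strict Implicit. Unset Printing Implicit Defensive.
Import Order.TTheory GRing.Theory Num.Theory.
Local Open Scope ring_scope.

(* Choose the data so that the objective is M * [x_00 or y_00]: a linear cost M
   on both corner entries and a quadratic cost -M on the pair of them.  In the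
   solution with both corner entries set, every neighbour (for either
   neighbourhood) changes only one of x and y, so the other corner entry stays
   set and the value stays M; but a solution avoiding both corners costs 0, so
   M = K + 1 exceeds the optimum by more than K, and exceeds the average since
   all values lie in [0, M]. *)

Section BadLocalOptimum.
Variable R : realFieldType.

Lemma b2R_orb (a b : bool) : b2R R (a || b) = b2R R a + b2R R b - b2R R a * b2R R b.
Proof. by case: a; case: b; rewrite /b2R /=; ring. Qed.

Lemma sum_delta_mx p q (a : 'I_p) (b : 'I_q) (F : 'I_p -> 'I_q -> R) :
  \sum_i \sum_j delta_mx a b i j * F i j = F a b.
Proof.
rewrite (bigD1 a) //= (bigD1 b) //= mxE !eqxx mul1r.
rewrite big1 => [|j /negPf ne_jb]; last by rewrite mxE ne_jb andbF mul0r.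
rewrite big1 ?addr0 // => i /negPf ne_ia.
by apply: big1 => j _; rewrite mxE ne_ia mul0r.
Qed.

Lemma sum_delta_mx2 p q r s (a : 'I_p) (b : 'I_q) (c : 'I_r) (d : 'I_s)
    (F : 'I_p -> 'I_q -> 'I_r -> 'I_s -> R) :
  \sum_i \sum_j \sum_k \sum_l delta_mx a b i j * delta_mx c d k l * F i j k l
  = F a b c d.
Proof.
transitivity (\sum_i \sum_j delta_mx a b i j *
                 \sum_k \sum_l delta_mx c d k l * F i j k l).
  apply: eq_bigr => i _; apply: eq_bigr => j _; rewrite mulr_sumr.
  by apply: eq_bigr => k _; rewrite mulr_sumr; apply: eq_bigr => l _; rewrite mulrA.
by rewrite sum_delta_mx sum_delta_mx.
Qed.

Lemma rowfeas_const p q (a : 'I_q) : rowfeas (\matrix_(i < p, j < q) (j == a)).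
Proof.
apply/forallP => i; rewrite (bigD1 a) //= mxE eqxx big1 //.
by move=> j /negPf ne_ja; rewrite mxE ne_ja.
Qed.

Lemma colfeas_const p q (a : 'I_p) : colfeas (\matrix_(i < p, j < q) (i == a)).
Proof.
apply/forallP => j; rewrite (bigD1 a) //= mxE eqxx big1 //.
by move=> i /negPf ne_ia; rewrite mxE ne_ia.
Qed.

Lemma average_lt p q r s (f : 'M[bool]_(p, q) -> 'M[bool]_(r, s) -> R) M x y :
  feasible x y -> f x y < M ->
  (forall x' y', feasible x' y' -> f x' y' <= M) -> average f < M.
Proof.
move=> feas_xy lt_fM le_fM; rewrite /average.
set P := [pred pr : 'M[bool]_(p, q) * 'M[bool]_(r, s) | feasible pr.1 pr.2].
have P_gt0 : (0 < #|P|)%N by apply/card_gt0P; exists (x, y).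
rewrite ltr_pdivrMr ?ltr0n // mulr_natr -(@sumr_const _ _ P).
rewrite [X in _ < X](bigD1 (x, y)) //= (bigD1 (x, y)) //=.
by rewrite ltr_leD // ler_sum // => pr /andP[feas_pr _]; apply: le_fM.
Qed.

Definition corner_or_cost p q r s (M : R)
    (x : 'M[bool]_(p.+1, q.+1)) (y : 'M[bool]_(r.+1, s.+1)) : R :=
  M * b2R R (x ord0 ord0 || y ord0 ord0).

Lemma bad_local_optimum_corner p q r s
    (f : 'M[bool]_(p.+1, q.+2) -> 'M[bool]_(r.+2, s.+1) -> R) (K : R) :
  0 < K -> f =2 corner_or_cost (K + 1) ->
  bad_local_optimum f K (\matrix_(i, j) (j == ord0)) (\matrix_(i, j) (i == ord0)).
Proof.
move=> K_gt0 fE; set M := K + 1 in fE.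
have M_gt0 : 0 < M by rewrite ltr_wpDr.
have f_le x y : f x y <= M.
  by rewrite fE /corner_or_cost /b2R; case: (_ || _);
     rewrite /= ?mulr1n ?mulr0n ?mulr1 ?mulr0 ?lexx // ltW.
have f_ge0 x y : 0 <= f x y.
  by rewrite fE /corner_or_cost /b2R; case: (_ || _);
     rewrite /= ?mulr1n ?mulr0n ?mulr1 ?mulr0 ?lexx // ltW.
have f_corner (x : 'M_(p.+1, q.+2)) (y : 'M_(r.+2, s.+1)) :
    x ord0 ord0 || y ord0 ord0 -> f x y = M.
  by move=> xy00; rewrite fE /corner_or_cost xy00 /b2R mulr1.
set x0 := \matrix_(i, j) _; set y0 := \matrix_(i, j) _.
have f_xy0 : f x0 y0 = M by apply: f_corner; rewrite !mxE eqxx.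
set xs := \matrix_(i < p.+1, j < q.+2) (j == ord_max).
set ys := \matrix_(i < r.+2, j < s.+1) (i == ord_max).
have feas_s : feasible xs ys by rewrite /feasible rowfeas_const colfeas_const.
have f_s : f xs ys = 0 by rewrite fE /corner_or_cost !mxE /b2R mulr0.
have shared_opt x' y' : x' = x0 \/ y' = y0 -> ~ f x' y' < f x0 y0.
  by case=> ->; rewrite f_xy0 f_corner ?ltxx // !mxE eqxx ?orbT.
split.
- by rewrite /feasible rowfeas_const colfeas_const.
- by move=> x' y' [[-> _]|[-> _]]; apply: shared_opt; [right|left].
- by move=> x' y' [[-> _]|[-> _]]; apply: shared_opt; [right|left].
- exists xs, ys; split => // [x' y' _|]; first by rewrite f_s.
  by rewrite f_s f_xy0 add0r /M ltrDl ltr01.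
- by rewrite f_xy0; apply: (average_lt feas_s) => //; rewrite f_s.
Qed.

Definition corner_quad p q r s (M : R)
    (i : 'I_p.+1) (j : 'I_q.+1) (k : 'I_r.+1) (l : 'I_s.+1) : R :=
  - M * delta_mx ord0 ord0 i j * delta_mx ord0 ord0 k l.

Lemma corner_lin p q (M : R) (x : 'M[bool]_(p.+1, q.+1)) :
  \sum_i \sum_j (M *: delta_mx ord0 ord0) i j * b2R R (x i j)
  = M * b2R R (x ord0 ord0).
Proof.
under eq_bigr do under eq_bigr do rewrite mxE -mulrA.
by under eq_bigr do rewrite -mulr_sumr; rewrite -mulr_sumr sum_delta_mx.
Qed.

Lemma sum_corner_quad p q r s (M : R)
    (x : 'M[bool]_(p.+1, q.+1)) (y : 'M[bool]_(r.+1, s.+1)) :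
  \sum_i \sum_j \sum_k \sum_l corner_quad M i j k l * b2R R (x i j) * b2R R (y k l)
  = - M * b2R R (x ord0 ord0) * b2R R (y ord0 ord0).
Proof.
have := sum_delta_mx2 ord0 ord0 ord0 ord0
  (fun i j k l => - M * b2R R (x i j) * b2R R (y k l)) => /= <-.
apply: eq_bigr => i _; apply: eq_bigr => j _; apply: eq_bigr => k _.
by apply: eq_bigr => l _; rewrite /corner_quad; ring.
Qed.

Lemma f1_corner m n (M : R) (x y : 'M[bool]_(m.+1, n.+1)) :
  f1 (corner_quad M) (M *: delta_mx ord0 ord0) (M *: delta_mx ord0 ord0) x y
  = corner_or_cost M x y.
Proof.
rewrite /f1 !corner_lin; under eq_bigr do rewrite exchange_big.
by rewrite sum_corner_quad /corner_or_cost b2R_orb; ring.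
Qed.

Lemma f2_corner m n (M : R) (x : 'M[bool]_m.+1) (y : 'M[bool]_n.+1) :
  f2 (corner_quad M) (M *: delta_mx ord0 ord0) (M *: delta_mx ord0 ord0) x y
  = corner_or_cost M x y.
Proof.
by rewrite /f2 !corner_lin sum_corner_quad /corner_or_cost b2R_orb; ring.
Qed.
End BadLocalOptimum.

Theorem theorem5 :
  (forall (R : realFieldType) (m n : nat), (2 <= m)%N -> (2 <= n)%N ->
    forall K : R, 0 < K ->
    exists (Q : 'I_m -> 'I_n -> 'I_m -> 'I_n -> R) (c d : 'M[R]_(m, n))
           (x y : 'M[bool]_(m, n)),
      bad_local_optimum (f1 Q c d) K x y)
  /\
  (forall (R : realFieldType) (m n : nat), (2 <= m)%N -> (2 <= n)%N ->
    forall K : R, 0 < K ->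
    exists (Q : 'I_m -> 'I_m -> 'I_n -> 'I_n -> R) (c : 'M[R]_m) (d : 'M[R]_n)
           (x : 'M[bool]_m) (y : 'M[bool]_n),
      bad_local_optimum (f2 Q c d) K x y).
Proof.
split=> R [|[|m]] // [|[|n]] // _ _ K K_gt0;
  exists (corner_quad (K + 1)), ((K + 1) *: delta_mx ord0 ord0),
         ((K + 1) *: delta_mx ord0 ord0);
  do 2 eexists; apply: bad_local_optimum_corner => // x y.
- exact: f1_corner.
- exact: f2_corner.
Qed.
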